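(* For every real constant $c>0$ and every positive integer $N_0$, there exist an integer $N\ge N_0$ and a bipartite graph $W$ with $N$ vertices in each part and exactly $N^{6/5}$ edges such that $W$ is $C_{10}$-free and every subgraph of $W$ with at least $c\,|E(W)|$ edges contains a copy of $C_8$.
   Context: $C_m$ denotes the cycle of length $m$; a graph is $F$-free if it contains no subgraph isomorphic to $F$. (In the paper, $W$ is the Wenger graph $W_5(q)$: for a prime power $q$, the bipartite point–line incidence graph between $\mathbb{F}_q^5$ and the set of all affine lines $\{v+t(1,a,a^2,a^3,a^4): t\in\mathbb{F}_q\}$, $v\in\mathbb{F}_q^5$, $a\in\mathbb{F}_q$, so $N=q^5$.) *)

From mathcomp Require Import all_boot all_order all_algebra.
From mathcomp Require Import reals.
Set Implicit Arguments. Unset Strict Implicit. Unset Printing Implicit Defensive.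

(* A bipartite graph with parts 'I_m (left) and 'I_n (right) is given by its
   edge set E : {set 'I_m * 'I_n}; (x, y) \in E means x ~ y. *)

(* Any cycle of a bipartite graph
   alternates between the parts, so this is exactly a C_{2k} subgraph. *)
Definition has_cycle2 (m n k : nat) (E : {set 'I_m * 'I_n}) : Prop :=
  exists (a : 'I_k -> 'I_m) (b : 'I_k -> 'I_n),
    injective a /\ injective b /\
    forall i : 'I_k, (a i, b i) \in E /\ (a (ordS i), b i) \in E.

(* A point P of W_5(q) lies on the line of slope a through it, and moving
   along that line changes P by a multiple of the moment vector
   v_a = (1, a, ..., a^4).  Going round a C_10 makes five such moves, with
   consecutive slopes distinct, that cancel out; some slope occurs only once,
   and a Vandermonde argument shows that such moves cannot cancel.
   For C_8, encode a subgraph by its set S of incidences (P, a).  The four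
   points P, P + s v_a, P + s v_a + u v_b, P + u v_b (s, u <> 0, a <> b),
   each with both slopes a and b in S, form a C_8.  If there is none, then for
   a <> b the points having both slopes are at most sqrt(2 q^9): by
   Cauchy-Schwarz over the a-lines, the ordered pairs of them on a common
   a-line inject into (b-line, displacement).  Summing and applying
   Cauchy-Schwarz twice more gives |S|^2 <= q^5 (|S| + sqrt(2 q^13)), which is
   incompatible with |S| >= c q^6 once q is large. *)

From mathcomp Require Import all_boot all_order all_algebra.
From mathcomp Require Import reals.
From mathcomp Require Import ring lra.
From Stdlib Require Import Classical.
Import Order.TTheory GRing.Theory Num.Theory.
Set Implicit Arguments. Unset Strict Implicit. Unset Printing Implicit Defensive.

Definition cycle2 (A B : finType) (k : nat) (E : {set A * B}) : Prop :=
  exists (a : 'I_k -> A) (b : 'I_k -> B),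
    injective a /\ injective b /\
    forall i : 'I_k, (a i, b i) \in E /\ (a (ordS i), b i) \in E.

Lemma cycle2_map (A B A' B' : finType) (f : A -> A') (g : B -> B') k
    (E : {set A * B}) (E' : {set A' * B'}) :
  injective f -> injective g -> (forall x y, (x, y) \in E -> (f x, g y) \in E') ->
  cycle2 k E -> cycle2 k E'.
Proof.
move=> inj_f inj_g fgE [a [b [inj_a [inj_b edges]]]].
exists (f \o a), (g \o b); do 2?split; try exact: inj_comp.
by move=> i; case: (edges i) => /fgE ? /fgE ?.
Qed.

Lemma cycle2_4_intro (A B : finType) (E : {set A * B}) (a0 a1 a2 a3 : A) (b0 b1 b2 b3 : B) :
  uniq [:: a0; a1; a2; a3] -> uniq [:: b0; b1; b2; b3] ->
  (a0, b0) \in E -> (a1, b0) \in E -> (a1, b1) \in E -> (a2, b1) \in E ->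
  (a2, b2) \in E -> (a3, b2) \in E -> (a3, b3) \in E -> (a0, b3) \in E ->
  cycle2 4 E.
Proof.
move=> uniq_a uniq_b e00 e10 e11 e21 e22 e32 e33 e03.
have nth_inj (T : eqType) (s : seq T) x0 : uniq s -> size s = 4 ->
    injective (fun i : 'I_4 => nth x0 s i).
  by move=> uniq_s size_s i j /eqP; rewrite nth_uniq ?size_s // => /eqP/val_inj.
exists (fun i => nth a0 [:: a0; a1; a2; a3] i), (fun i => nth b0 [:: b0; b1; b2; b3] i).
do 2?split; try exact: nth_inj.
by case=> -[|[|[|[|//]]]] lt_i4; rewrite /= ?modn_small.
Qed.

(* Otherwise every value would occur exactly twice, at positions two apart,
   pairing up the five positions. *)
Lemma pentagon_has_unique (T : eqType) (x : nat -> T) :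
  (forall k, k < 5 -> x k != x (k.+1 %% 5)) ->
  exists2 i, i < 5 & forall j, j < 5 -> j != i -> x j != x i.
Proof.
move=> x_ne.
have n01 : x 0 != x 1 := x_ne 0 isT. have n12 : x 1 != x 2 := x_ne 1 isT.
have n23 : x 2 != x 3 := x_ne 2 isT. have n34 : x 3 != x 4 := x_ne 3 isT.
have n40 : x 4 != x 0 := x_ne 4 isT.
have [e02|n02] := eqVneq (x 0) (x 2).
  have [e41|n41] := eqVneq (x 4) (x 1).
    by exists 3 => // -[|[|[|[|[|]]]]] //= _ _; rewrite ?e02 -?e41 // eq_sym.
  by exists 4 => // -[|[|[|[|[|]]]]] //= _ _; rewrite -?e02 // eq_sym.
have [e03|n03] := eqVneq (x 0) (x 3).
  have [e14|n14] := eqVneq (x 1) (x 4).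
    by exists 2 => // -[|[|[|[|[|]]]]] //= _ _; rewrite ?e03 -?e14 // eq_sym.
  by exists 1 => // -[|[|[|[|[|]]]]] //= _ _; rewrite -?e03 // eq_sym.
by exists 0 => // -[|[|[|[|[|]]]]] //= _ _; rewrite eq_sym.
Qed.

Lemma ordS_neq n (i : 'I_n.+2) : ordS i != i.
Proof.
rewrite -val_eqE /=; case: (ltngtP i.+1 n.+2) => [lt_i|lt_n|[->]].
- by rewrite modn_small // gtn_eqF.
- by rewrite ltnS leqNgt ltn_ord in lt_n.
- by rewrite modnn.
Qed.

Lemma cycle5_has_unique (T : eqType) (d : 'I_5 -> T) :
  (forall i, d i != d (ordS i)) -> exists i, forall j, j != i -> d j != d i.
Proof.
move=> d_ne; have [k lt_k5|i lt_i5 x_i] := @pentagon_has_unique _ (fun k => d (inord k)).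
  suff -> : inord (k.+1 %% 5) = ordS (inord k : 'I_5) by exact: d_ne.
  by apply/val_inj; rewrite /= !inordK // ltn_pmod.
exists (inord i) => j ne_ji; rewrite -(inord_val j).
by apply: x_i => //; apply: contraNneq ne_ji => <-; rewrite inord_val.
Qed.

Lemma sum_sqr_le (T : finType) (f : T -> nat) :
  (\sum_i f i) ^ 2 <= #|T| * \sum_i f i ^ 2.
Proof.
rewrite -(leq_pmul2l (isT : 0 < 2)).
have sum_const n : \sum_(i : T) n = #|T| * n by rewrite sum_nat_const.
have -> : (\sum_i f i) ^ 2 = \sum_i \sum_j f i * f j.
  by rewrite expnS expn1 big_distrl; apply: eq_bigr => i _; rewrite big_distrr.
have -> : 2 * (#|T| * \sum_i f i ^ 2) = \sum_i \sum_j (f i ^ 2 + f j ^ 2).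
  transitivity (\sum_i (#|T| * f i ^ 2 + \sum_j f j ^ 2)).
    by rewrite big_split /= -big_distrr sum_const mul2n -addnn.
  by apply: eq_bigr => i _; rewrite big_split /= sum_const.
rewrite big_distrr leq_sum // => i _; rewrite big_distrr leq_sum // => j _.
exact: nat_Cauchy.
Qed.

Definition fibre (T U : finType) (g : T -> U) (X : {set T}) u :=
  [set x in X | g x == u].

Definition fibre_pairs (T U : finType) (g : T -> U) (X : {set T}) :=
  [set p : T * T | [&& p.1 \in X, p.2 \in X, g p.1 == g p.2 & p.1 != p.2]].

Lemma card_fibres (T U : finType) (g : T -> U) (X : {set T}) :
  #|X| = \sum_u #|fibre g X u|.
Proof.
rewrite -sum1_card (partition_big g predT) //=; apply: eq_bigr => u _.
by rewrite -sum1_card; apply: eq_bigl => x; rewrite inE.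
Qed.

Lemma card_sqr_le_fibres (T U : finType) (g : T -> U) (X : {set T}) :
  #|X| ^ 2 <= #|U| * \sum_u #|fibre g X u| ^ 2.
Proof. by rewrite (card_fibres g) sum_sqr_le. Qed.

Lemma sum_card_fibre_sqr (T U : finType) (g : T -> U) (X : {set T}) :
  \sum_u #|fibre g X u| ^ 2 = #|X| + #|fibre_pairs g X|.
Proof.
pose E := [set p : T * T | [&& p.1 \in X, p.2 \in X & g p.1 == g p.2]].
have -> : \sum_u #|fibre g X u| ^ 2 = #|E|.
  rewrite (card_fibres (fun p => g p.1)); apply: eq_bigr => u _.
  rewrite expnS expn1 -cardsX; apply: eq_card => -[x y]; rewrite !inE /=.
  case: (g x =P u) => [<-|_]; last by rewrite !andbF.
  by rewrite !andbT [g y == _]eq_sym.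
rewrite -(cardsID [set p : T * T | p.1 == p.2]); congr (_ + _); last first.
  by apply: eq_card => -[x y]; rewrite !inE /= andbC -!andbA.
rewrite -[#|X|](card_imset _ (@can_inj _ _ (fun x => (x, x)) fst (fun _ => erefl))).
apply: eq_card => -[x y]; rewrite !inE /=; apply/andP/imsetP.
  by case=> /and3P[x_X _ _] /eqP <-; exists x.
by case=> z z_X [-> ->]; rewrite z_X eqxx.
Qed.

Lemma card_rV (T : finType) n : #|'rV[T]_n| = #|T| ^ n.
Proof. by rewrite card_mx mul1n. Qed.

Local Open Scope ring_scope.

Section WengerGeometry.
Variable F : fieldType.

Definition moment n (a : F) : 'rV[F]_n := \row_(j < n) a ^+ j.

(* The line {P + t v_a} is encoded by its slope a and the last four
   coordinates of its point with first coordinate 0. *)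
Definition line_at (P : 'rV[F]_5) (a : F) : F * 'rV[F]_4 :=
  (a, \row_(j < 4) (P 0 (lift ord0 j) - P 0 0 * a ^+ (lift ord0 j))).

Lemma line_at_shift P s a : line_at (P + s *: moment 5 a) a = line_at P a.
Proof. by congr pair; apply/matrixP => i j; rewrite !mxE /=; ring. Qed.

Lemma eq_line_at P P' a :
  line_at P a = line_at P' a -> P' = P + (P' 0 0 - P 0 0) *: moment 5 a.
Proof.
case=> /matrixP eqP'; apply/matrixP => i k; rewrite (ord1 i) !mxE.
case: (unliftP ord0 k) => [j ->|->]; last by rewrite expr0; ring.
have := eqP' 0 j; rewrite !mxE => eq_j.
by rewrite -(subrK (P' 0 0 * a ^+ lift ord0 j) (P' 0 _)) -eq_j; ring.
Qed.

Lemma line_at_snd_inj (P Q : 'rV[F]_5) a :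
  (line_at P a).2 = (line_at Q a).2 -> line_at P a = line_at Q a.
Proof. by move=> eq2; rewrite [LHS]surjective_pairing eq2. Qed.

(* The polynomial prod_(j != i) (X - d j) has degree n - 1, so pairing it with
   the moment vectors kills every term but the i-th. *)
Lemma moment_comb_neq0 n (d t : 'I_n -> F) i :
  t i != 0 -> (forall j, j != i -> d j != d i) ->
  \sum_j t j *: moment n (d j) != 0.
Proof.
move=> ti_neq0 d_uniq; apply/eqP => comb0.
pose L := \prod_(x <- [seq d j | j <- enum (predC1 i)]) ('X - x%:P).
have size_L : (size L <= n)%N.
  rewrite size_prod_XsubC size_map -cardE cardC1 card_ord.
  by case: n i {d t ti_neq0 d_uniq comb0 L} => [[]|].
have rootL j : root L (d j) = (j != i).
  rewrite root_prod_XsubC; apply/mapP/idP => [[k] | ji]; last first.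
    by exists j; rewrite // mem_enum.
  rewrite mem_enum => ki dj; apply: contraNneq (d_uniq k ki) => ji.
  by rewrite -dj ji.
have : \sum_j t j * L.[d j] = 0.
  transitivity (\sum_(k < n) L`_k * (\sum_j t j *: moment n (d j)) 0 k); last first.
    by rewrite comb0; apply: big1 => k _; rewrite mxE mulr0.
  under eq_bigr => j _ do rewrite (horner_coef_wide _ size_L) big_distrr.
  rewrite exchange_big; apply: eq_bigr => k _.
  rewrite summxE big_distrr; apply: eq_bigr => j _; rewrite !mxE.
  exact: mulrCA.
rewrite (bigD1 i) //= big1 ?addr0 => [|j ji]; last first.
  by apply/eqP; rewrite mulf_eq0 -/(root L _) rootL ji orbT.
by move/eqP; rewrite mulf_eq0 -/(root L _) rootL eqxx (negPf ti_neq0).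
Qed.

End WengerGeometry.

Section Parallelogram.
Variables (F : fieldType) (a b : F) (P : 'rV[F]_5).
Hypothesis neq_ab : a != b.

Lemma moment_indep2 s u : s *: moment 5 a + u *: moment 5 b = 0 -> s = 0 /\ u = 0.
Proof.
move/matrixP=> comb0; have := comb0 0 0; have := comb0 0 1.
rewrite !mxE !expr0 !expr1 !mulr1 => e1 /eqP; rewrite addr_eq0 => /eqP us.
move: e1; rewrite us mulNr addrC -mulrBr => /eqP.
by rewrite mulf_eq0 subr_eq0 [b == a]eq_sym (negPf neq_ab) orbF => /eqP->; rewrite oppr0.
Qed.

Definition corner s u := P + (s *: moment 5 a + u *: moment 5 b).

Lemma corner_inj s u s' u' : corner s u = corner s' u' -> s = s' /\ u = u'.
Proof.
move/addrI/eqP; rewrite -subr_eq0 opprD addrACA -!scalerBl => /eqP/moment_indep2.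
by case=> /eqP; rewrite subr_eq0 => /eqP-> /eqP; rewrite subr_eq0 => /eqP->.
Qed.

Lemma line_at_corner_a s u : line_at (corner s u) a = line_at (corner 0 u) a.
Proof. by rewrite /corner scale0r add0r addrCA addrC line_at_shift. Qed.

Lemma line_at_corner_b s u : line_at (corner s u) b = line_at (corner s 0) b.
Proof. by rewrite /corner scale0r addr0 addrA line_at_shift. Qed.

Lemma line_at_corner_a_inj u u' :
  line_at (corner 0 u) a = line_at (corner 0 u') a -> u = u'.
Proof.
move/eq_line_at; set t := (_ - _) => eq_u.
suff [_ ->] : t = 0 /\ u = u' by [].
by apply: corner_inj; rewrite eq_u /corner scale0r add0r -addrA (addrC (u *: _)).
Qed.

Lemma line_at_corner_b_inj s s' :
  line_at (corner s 0) b = line_at (corner s' 0) b -> s = s'.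
Proof.
move/eq_line_at; set t := (_ - _) => eq_s.
suff [-> _] : s = s' /\ t = 0 by [].
by apply: corner_inj; rewrite eq_s /corner scale0r addr0 addrA.
Qed.

End Parallelogram.

Section WengerGraph.
Variable F : finFieldType.

Definition wenger_graph : {set 'rV[F]_5 * (F * 'rV[F]_4)} :=
  [set x | x.2 == line_at x.1 x.2.1].

Lemma wenger_C10_free : ~ cycle2 5 wenger_graph.
Proof.
move=> [P [L [inj_P [inj_L edges]]]].
have on_line i : L i = line_at (P i) (L i).1 /\ L i = line_at (P (ordS i)) (L i).1.
  by case: (edges i); rewrite !inE => /eqP ? /eqP ?.
pose d i := (L i).1; pose t i := P (ordS i) 0 0 - P i 0 0.
have step i : P (ordS i) = P i + t i *: moment 5 (d i).
  by apply: eq_line_at; case: (on_line i) => <- <-.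
have sum0 : \sum_i t i *: moment 5 (d i) = 0.
  transitivity (\sum_i (P (ordS i) - P i)).
    by apply: eq_bigr => i _; rewrite step addrC addKr.
  by rewrite sumrB [X in _ - X](reindex_inj (@ordS_inj 5)) subrr.
have t_neq0 i : t i != 0.
  apply: contra (ordS_neq i) => /eqP t0; apply/eqP/inj_P.
  by rewrite step t0 scale0r addr0.
have d_ne i : d i != d (ordS i).
  apply: contra (ordS_neq i) => /eqP eq_d; apply/eqP/inj_L.
  case: (on_line (ordS i)) => -> _; case: (on_line i) => _ ->.
  by congr line_at; apply/esym.
have [i d_uniq] := cycle5_has_unique d_ne.
by have := moment_comb_neq0 (t_neq0 i) d_uniq; rewrite sum0 eqxx.
Qed.

Definition wenger_edge (x : 'rV[F]_5 * F) := (x.1, line_at x.1 x.2).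

End WengerGraph.

Arguments wenger_edge {F} x.

Section WengerSubgraph.
Variables (F : finFieldType) (S : {set 'rV[F]_5 * F}).

Definition codeg_set (a b : F) := [set P | ((P, a) \in S) && ((P, b) \in S)].

Lemma mem_wenger_edge P a : (P, a) \in S -> (P, line_at P a) \in wenger_edge @: S.
Proof. by move=> Pa_S; apply/imsetP; exists (P, a). Qed.

Lemma parallelogram_C8 (a b s u : F) P : a != b -> s != 0 -> u != 0 ->
  (forall x y, x \in [:: 0; s] -> y \in [:: 0; u] -> corner a b P x y \in codeg_set a b) ->
  cycle2 4 (wenger_edge @: S).
Proof.
move=> neq_ab s_neq0 u_neq0 corners.
have in_S x y c : x \in [:: 0; s] -> y \in [:: 0; u] -> c \in [:: a; b] ->
    (corner a b P x y, c) \in S.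
  move=> x_s y_u; rewrite !inE => /orP[]/eqP->;
  by have := corners x y x_s y_u; rewrite inE => /andP[].
have edge_a x y : x \in [:: 0; s] -> y \in [:: 0; u] ->
    (corner a b P x y, line_at (corner a b P 0 y) a) \in wenger_edge @: S.
  move=> x_s y_u; rewrite -(line_at_corner_a a b P x y).
  by apply/mem_wenger_edge/(in_S _ _ _ x_s y_u); rewrite !inE eqxx.
have edge_b x y : x \in [:: 0; s] -> y \in [:: 0; u] ->
    (corner a b P x y, line_at (corner a b P x 0) b) \in wenger_edge @: S.
  move=> x_s y_u; rewrite -(line_at_corner_b a b P x y).
  by apply/mem_wenger_edge/(in_S _ _ _ x_s y_u); rewrite !inE eqxx orbT.
have eq_corner x y x' y' :
    (corner a b P x y == corner a b P x' y') = (x == x') && (y == y').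
  by apply/eqP/andP => [/(corner_inj neq_ab)[-> ->]|[/eqP-> /eqP->]].
have neq_slope Q Q' : (line_at Q a == line_at Q' b) = false.
  by rewrite xpair_eqE (negPf neq_ab).
have neq_line_a : line_at (corner a b P 0 0) a != line_at (corner a b P 0 u) a.
  by apply: contra u_neq0 => /eqP/line_at_corner_a_inj <-.
have neq_line_b : line_at (corner a b P s 0) b != line_at (corner a b P 0 0) b.
  by apply: contra s_neq0 => /eqP/(line_at_corner_b_inj neq_ab) ->.
apply: (@cycle2_4_intro _ _ _ (corner a b P 0 0) (corner a b P s 0) (corner a b P s u)
  (corner a b P 0 u) (line_at (corner a b P 0 0) a) (line_at (corner a b P s 0) b)
  (line_at (corner a b P 0 u) a) (line_at (corner a b P 0 0) b)).
- rewrite /= !inE !eq_corner !eqxx [0 == s]eq_sym [0 == u]eq_sym.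
  by rewrite (negPf s_neq0) (negPf u_neq0).
- rewrite /= !inE !neq_slope ![line_at _ b == line_at _ a]eq_sym !neq_slope.
  by rewrite (negPf neq_line_a) (negPf neq_line_b).
all: by first [apply: edge_a | apply: edge_b]; rewrite !inE eqxx ?orbT.
Qed.

Hypothesis C8_free : ~ cycle2 4 (wenger_edge @: S).
Local Notation q := #|F|.

(* Distinct pairs (P1, P1') and (P2, P2') with the same image under [f] span a
   parallelogram P1, P1', P2', P2, hence a C_8. *)
Lemma card_codeg_set_sqr_le a b : a != b -> (#|codeg_set a b| ^ 2 <= 2 * q ^ 9)%N.
Proof.
move=> neq_ab; set X := codeg_set a b; pose g P := (line_at P a).2.
pose f (p : 'rV[F]_5 * 'rV[F]_5) := ((line_at p.1 b).2, p.2 0 0 - p.1 0 0).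
have f_inj : {in fibre_pairs g X &, injective f}.
  move=> [P1 P1'] [P2 P2']; rewrite !inE /=.
  move=> /and4P[X1 X1' /eqP/line_at_snd_inj/eq_line_at e1 n1].
  move=> /and4P[X2 X2' /eqP/line_at_snd_inj/eq_line_at e2 _].
  case=> /line_at_snd_inj/eq_line_at e12 eq_s.
  have [eq12|n12] := eqVneq P1 P2.
    by rewrite e1 [in RHS]e2 eq_s eq12.
  set s := P1' 0 0 - P1 0 0 in e1 eq_s; set u := P2 0 0 - P1 0 0 in e12.
  rewrite -eq_s e12 in e2.
  case: C8_free; apply: (@parallelogram_C8 a b s u P1) => //.
  - by apply: contra n1 => /eqP s0; rewrite e1 s0 scale0r addr0.
  - by apply: contra n12 => /eqP u0; rewrite e12 u0 scale0r addr0.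
  move=> x y; rewrite !inE => /orP[]/eqP-> /orP[]/eqP->.
  all: rewrite /corner ?scale0r ?addr0 ?add0r.
  - by [].
  - by rewrite -e12.
  - by rewrite -e1.
  - by rewrite (addrC (s *: _)) addrA -e2.
have card_pairs : (#|fibre_pairs g X| <= q ^ 5)%N.
  rewrite -(card_in_imset f_inj) (leq_trans (max_card _)) //.
  by rewrite card_prod card_rV -expnSr.
have := card_sqr_le_fibres g X; rewrite sum_card_fibre_sqr card_rV => le_X.
have card_X : (#|X| <= q ^ 5)%N by rewrite -card_rV max_card.
apply: leq_trans le_X (leq_trans (leq_mul (leqnn _) (leq_add card_X card_pairs)) _).
by rewrite addnn -mul2n mulnCA -expnD.
Qed.

Lemma card_sqr_le_point_pairs :
  (#|S| ^ 2 <= q ^ 5 * (#|S| + #|fibre_pairs fst S|))%N.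
Proof. by rewrite -card_rV -sum_card_fibre_sqr card_sqr_le_fibres. Qed.

Lemma card_point_pairs_sqr_le : (#|fibre_pairs fst S| ^ 2 <= 2 * q ^ 13)%N.
Proof.
set D := fibre_pairs fst S; pose h (p : ('rV[F]_5 * F) * ('rV[F]_5 * F)) := (p.1.2, p.2.2).
have fib_le ab : (#|fibre h D ab| ^ 2 <= 2 * q ^ 9)%N.
  case: ab => a b; have [<-|neq_ab] := eqVneq a b.
    rewrite (_ : fibre h D (a, a) = set0) ?cards0 //.
    apply/setP => -[[P x] [P' y]]; rewrite !inE /h /= !xpair_eqE; apply/negbTE/negP.
    case/andP=> /and4P[_ _ /eqP eq_P neq] /andP[/eqP eq_x /eqP eq_y].
    by rewrite eq_P eq_x eq_y !eqxx in neq.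
  apply: leq_trans (card_codeg_set_sqr_le neq_ab); rewrite leq_exp2r //.
  have fst_inj : {in fibre h D (a, b) &, injective (fun p => p.1.1)}.
    move=> [[P x] [P' y]] [[Q x'] [Q' y']]; rewrite !inE /h /= !xpair_eqE.
    case/andP=> /and4P[_ _ /eqP<- _] /andP[/eqP-> /eqP->].
    by case/and3P=> /and4P[_ _ /eqP eq_Q _] /eqP-> /eqP-> eq_PQ; rewrite eq_PQ eq_Q.
  rewrite -(card_in_imset fst_inj); apply/subset_leq_card/subsetP.
  move=> Q /imsetP[[[P x] [P' y]] + ->]; rewrite !inE /h /= !xpair_eqE.
  by case/and3P=> /and4P[Px_S P'y_S /eqP eq_P _] /eqP<- /eqP<-; rewrite Px_S eq_P P'y_S.
apply/(leq_trans (card_sqr_le_fibres h D)).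
have le_sum : (\sum_ab #|fibre h D ab| ^ 2 <= \sum_(ab : F * F) 2 * q ^ 9)%N.
  exact: leq_sum.
apply: (leq_trans (leq_mul (leqnn _) le_sum)).
have -> : (2 * q ^ 13 = q ^ 2 * (q ^ 2 * (2 * q ^ 9)))%N.
  by rewrite mulnCA [(q ^ 2 * _)%N]mulnCA -!expnD.
by rewrite sum_nat_const card_prod.
Qed.

End WengerSubgraph.

(* From m >= c q^6 > 2 q^5 the first bound gives m^2 <= 2 q^5 Sg, whence
   c^4 q^14 <= 4 Sg^2 <= 8 q^13, contradicting c^4 q > 8. *)
Lemma dense_count_absurd (R : realFieldType) (c q m Sg : R) :
  0 < c -> 0 <= Sg -> 2 < c * q -> 8 < c ^+ 4 * q ->
  c * q ^+ 6 <= m -> m ^+ 2 <= q ^+ 5 * (Sg + m) -> Sg ^+ 2 <= 2 * q ^+ 13 -> False.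
Proof.
move=> c_gt0 Sg_ge0 cq2 cq8.
have q_gt0 : 0 < q by nra.
have Y_gt0 : 0 < q ^+ 5 by rewrite exprn_gt0.
rewrite (_ : q ^+ 6 = q * q ^+ 5); last by rewrite -exprS.
rewrite (_ : q ^+ 13 = q ^+ 3 * (q ^+ 5 * q ^+ 5)); last by rewrite -!exprD.
have q3_gt0 : 0 < q ^+ 3 by rewrite exprn_gt0.
move: Y_gt0; move: (q ^+ 5) => Y Y_gt0 dense le_m le_Sg.
have m_ge : 2 * Y <= m by nra.
have m_ge0 : 0 <= m by nra.
have m2_le : m * m <= 2 * Y * Sg.
  have : 0 <= m - 2 * Y by rewrite subr_ge0.
  by move/mulr_ge0/(_ m_ge0); rewrite expr2 in le_m; nra.
have cqY_ge0 : 0 <= c * (q * Y) by nra.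
have cqY2_le : c * (q * Y) * (c * (q * Y)) <= m * m by apply: ler_pM.
have cqY_le : c * c * q * q * Y <= 2 * Sg.
  have : c * c * q * q * Y * Y <= 2 * Sg * Y by nra.
  by rewrite ler_pM2r.
have c2qY_ge0 : 0 <= c * c * q * q * Y by nra.
have := ler_pM c2qY_ge0 c2qY_ge0 cqY_le cqY_le.
have -> : c * c * q * q * Y * (c * c * q * q * Y) = c ^+ 4 * q * (q ^+ 3 * (Y * Y)) by ring.
rewrite expr2 in le_Sg => le4.
have : c ^+ 4 * q * (q ^+ 3 * (Y * Y)) <= 8 * (q ^+ 3 * (Y * Y)) by lra.
by rewrite ler_pM2r ?mulr_gt0 //; lra.
Qed.

Lemma wenger_dense_C8 (R : realFieldType) (F : finFieldType) (c : R)
    (S : {set 'rV[F]_5 * F}) :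
  0 < c -> 2 < c * #|F|%:R -> 8 < c ^+ 4 * #|F|%:R -> c * (#|F| ^ 6)%:R <= #|S|%:R ->
  cycle2 4 (wenger_edge @: S).
Proof.
move=> c_gt0 cq2 cq8 dense; apply: NNPP => C8_free.
apply: (@dense_count_absurd _ c #|F|%:R #|S|%:R #|fibre_pairs fst S|%:R) => //.
- by rewrite -natrX.
- by rewrite -!natrX -natrD -natrM ler_nat addnC card_sqr_le_point_pairs.
- by rewrite -!natrX -natrM ler_nat card_point_pairs_sqr_le.
Qed.

Lemma gt_bound_scale (R : archiRealFieldType) (c : R) (p : nat) :
  0 < c -> (Num.bound (8 / c ^+ 4 + 2 / c) < p)%N -> 2 < c * p%:R /\ 8 < c ^+ 4 * p%:R.
Proof.
move=> c_gt0 large_p.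
have c4_gt0 : 0 < c ^+ 4 by rewrite exprn_gt0.
have ge0_8 : 0 <= 8 / c ^+ 4 by rewrite divr_ge0 // ltW.
have ge0_2 : 0 <= 2 / c by rewrite divr_ge0 // ltW.
have lt_p : 8 / c ^+ 4 + 2 / c < p%:R.
  by apply: lt_le_trans (archi_boundP (addr_ge0 ge0_8 ge0_2)) _; rewrite ler_nat ltnW.
by rewrite mulrC -ltr_pdivrMr // [_ * p%:R]mulrC -ltr_pdivrMr //; split; lra.
Qed.

Lemma relabel_bipartite (A B : finType) (E : {set A * B}) N :
  #|A| = N -> #|B| = N ->
  exists W : {set 'I_N * 'I_N},
    [/\ #|W| = #|E|, forall k, has_cycle2 k W -> cycle2 k E &
        forall W' : {set 'I_N * 'I_N}, W' \subset W -> exists E' : {set A * B},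
          [/\ E' \subset E, #|E'| = #|W'| & forall k, cycle2 k E' -> has_cycle2 k W']].
Proof.
move=> card_A card_B.
pose ea (i : 'I_N) := enum_val (cast_ord (esym card_A) i).
pose ra (x : A) := cast_ord card_A (enum_rank x).
pose eb (i : 'I_N) := enum_val (cast_ord (esym card_B) i).
pose rb (x : B) := cast_ord card_B (enum_rank x).
have eaK : cancel ea ra by move=> i; rewrite /ea /ra enum_valK cast_ordKV.
have raK : cancel ra ea by move=> x; rewrite /ea /ra cast_ordK enum_rankK.
have ebK : cancel eb rb by move=> i; rewrite /eb /rb enum_valK cast_ordKV.
have rbK : cancel rb eb by move=> x; rewrite /eb /rb cast_ordK enum_rankK.
pose h (x : 'I_N * 'I_N) := (ea x.1, eb x.2).
have h_inj : injective h by move=> [i j] [i' j'] [/(can_inj eaK)-> /(can_inj ebK)->].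
have h_onto y : y = h (ra y.1, rb y.2) by rewrite /h /= raK rbK; case: y.
exists (h @^-1: E); split.
- rewrite -(card_imset _ h_inj); apply: eq_card => y.
  apply/imsetP/idP => [[x + ->]|y_E]; first by rewrite inE.
  by exists (ra y.1, rb y.2); rewrite ?inE -?h_onto.
- by move=> k; apply: cycle2_map (can_inj eaK) (can_inj ebK) _ => i j; rewrite inE.
move=> W' sub_W'; exists (h @: W'); split.
- by apply/subsetP => _ /imsetP[x /(subsetP sub_W') + ->]; rewrite inE.
- exact: card_imset.
move=> k; apply: cycle2_map (can_inj raK) (can_inj rbK) _ => x y.
by rewrite [(x, y)]h_onto (mem_imset _ _ h_inj).
Qed.

Section WengerCard.
Variable F : finFieldType.

Lemma wenger_edge_inj : injective (@wenger_edge F).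
Proof. by move=> [P a] [P' a'] [-> -> _]. Qed.

Lemma wenger_graphE : wenger_graph F = wenger_edge @: setT.
Proof.
apply/setP => -[P [a L]]; rewrite inE /=; apply/eqP/imsetP => [->|[[Q b] _ [-> -> ->]]] //.
by exists (P, a).
Qed.

Lemma card_wenger_graph : #|wenger_graph F| = (#|F| ^ 6)%N.
Proof.
rewrite wenger_graphE card_imset ?cardsT ?card_prod ?card_rV -?expnSr //.
exact: wenger_edge_inj.
Qed.

Lemma wenger_subgraphE (E : {set 'rV[F]_5 * (F * 'rV[F]_4)}) :
  E \subset wenger_graph F -> E = wenger_edge @: (wenger_edge @^-1: E).
Proof.
rewrite wenger_graphE => sub_E; apply/setP => y; apply/idP/imsetP => [y_E|[x + ->]].
  by have /imsetP[x _ eq_y] := subsetP sub_E y y_E; exists x; rewrite // inE -eq_y.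
by rewrite inE.
Qed.

End WengerCard.

Theorem theorem1p3 (R : realType) (c : R) (N0 : nat) :
  0 < c -> (0 < N0)%N ->
  exists (N : nat) (W : {set 'I_N * 'I_N}),
    [/\ (N0 <= N)%N,
        (#|W| ^ 5 = N ^ 6)%N,
        ~ has_cycle2 5 W &
        forall F : {set 'I_N * 'I_N},
          F \subset W -> c * (#|W|)%:R <= (#|F|)%:R -> has_cycle2 4 F].
Proof.
move=> c_gt0 _.
have [p large_p p_prime] := prime_above (maxn (Num.bound (8 / c ^+ 4 + 2 / c)) N0).
have [cp2 cp8] := gt_bound_scale c_gt0 (leq_ltn_trans (leq_maxl _ _) large_p).
have card_p := card_Fp p_prime.
have card_lines : #|{: 'F_p * 'rV['F_p]_4}| = (p ^ 5)%N.
  by rewrite card_prod card_rV card_p -expnS.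
have card_points : #|'rV['F_p]_5| = (p ^ 5)%N by rewrite card_rV card_p.
have [W [card_W C10 sub_W]] := relabel_bipartite (wenger_graph 'F_p) card_points card_lines.
rewrite card_wenger_graph card_p in card_W.
exists (p ^ 5)%N, W; split.
- apply: leq_trans (ltnW (leq_ltn_trans (leq_maxr _ _) large_p)) _.
  by rewrite -{1}(expn1 p) leq_pexp2l ?prime_gt0.
- by rewrite card_W -!expnM mulnC.
- by move/C10; apply: wenger_C10_free.
move=> E sub_E dense; have [E' [sub_E' card_E' C8]] := sub_W E sub_E.
apply: C8; rewrite (wenger_subgraphE sub_E'); apply: (wenger_dense_C8 c_gt0).
- by rewrite card_p.
- by rewrite card_p.
by rewrite card_p -card_W -(card_imset _ (@wenger_edge_inj _)) -wenger_subgraphE ?card_E'.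
Qed.
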